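(* Let $X$ be a vector field on $\mathbb{S}^1$ for which $\mathcal{E}_X^\pm$ is defined, let $A\in\mathrm{O}_0(1,2)$ and $v\in\mathbb{R}^{1,2}$. Then $\mathcal{E}^\pm_{A_*X+\Lambda(v)}=A_*\mathcal{E}^\pm_X+\mathcal{E}^\pm_{\Lambda(v)}$.
   Context: $\mathbb{R}^{1,2}$ is $\mathbb{R}^3$ with $\langle x,y\rangle=-x_0y_0+x_1y_1+x_2y_2$; $\mathrm{O}_0(1,2)$ is the identity component of its linear isometry group, acting on $\overline{\mathbb{D}^2}$ by $A\cdot\eta=\Pi(A(1,\eta))$, $\Pi(x_0,x_1,x_2)=(x_1/x_0,x_2/x_0)$; $A_*$ denotes pushforward of vector fields by $\eta\mapsto A\cdot\eta$ (on $\mathbb{S}^1$ or $\mathbb{D}^2$). Minkowski cross product: $\langle x\boxtimes y,u\rangle=\det(x,y,u)$. $\Lambda(v)$ is the Killing field $\eta\mapsto\mathrm{d}_{(1,\eta)}\Pi((1,\eta)\boxtimes v)$ (also on $\mathbb{S}^1$). A vector field $X$ on $\mathbb{S}^1$ is $X(z)=iz\phi_X(z)$. $\phi_X^-(\eta)=\sup\{a(\eta):a\text{ affine},a|_{\mathbb{S}^1}\le\phi_X\}$, $\phi_X^+(\eta)=\inf\{a(\eta):a\text{ affine},a|_{\mathbb{S}^1}\ge\phi_X\}$. $\Sigma^-(\eta)$ is the set of $\sigma$ with $\langle(1,\xi),\sigma\rangle\le\phi_X^-(\xi)$ for all $\xi\in\mathbb{D}^2$ and equality at $\eta$; $\Sigma^+(\eta)$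 likewise with $\ge\phi^+_X$. $\mathcal{E}_X^\pm$ is defined when each $\Sigma^\pm(\eta)$, $\eta\in\mathbb{D}^2$, is a single point or a compact segment (this holds e.g. when $\phi_X$ is lower semicontinuous for $\mathcal{E}_X^-$, upper semicontinuous for $\mathcal{E}_X^+$), and then $\mathcal{E}_X^\pm(\eta)=\mathrm{d}_{(1,\eta)}\Pi((1,\eta)\boxtimes\sigma^\pm(\eta))$ with $\sigma^\pm(\eta)$ that point or the midpoint of that segment. *)

From HB Require Import structures.
From mathcomp Require Import all_boot all_order all_algebra.
From mathcomp Require Import all_classical all_reals ereal.
Set Implicit Arguments. Unset Strict Implicit. Unset Printing Implicit Defensive.
Import Order.TTheory GRing.Theory Num.Theory.
Local Open Scope ring_scope.
Local Open Scope classical_set_scope.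

Section Defs.
Variable R : realType.

Definition v3 (a b c : R) : 'cV[R]_3 := \col_(i < 3) [:: a; b; c]`_i.
Definition x0 (x : 'cV[R]_3) : R := x (inord 0) ord0.
Definition x1 (x : 'cV[R]_3) : R := x (inord 1) ord0.
Definition x2 (x : 'cV[R]_3) : R := x (inord 2) ord0.

Definition mink (x y : 'cV[R]_3) : R := - x0 x * x0 y + x1 x * x1 y + x2 x * x2 y.

Definition mink_isometry (A : 'M[R]_3) : Prop :=
  forall x y, mink (A *m x) (A *m y) = mink x y.
(* identity component O_0(1,2) = SO^+(1,2): det 1 and time-orientation preserving *)
Definition O0 (A : 'M[R]_3) : Prop :=
  mink_isometry A /\ \det A = 1 /\ 0 < A (inord 0) (inord 0).

Definition S1 (z : R * R) : Prop := z.1 ^+ 2 + z.2 ^+ 2 = 1.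
Definition D2 (z : R * R) : Prop := z.1 ^+ 2 + z.2 ^+ 2 < 1.

Definition add2 (p q : R * R) : R * R := (p.1 + q.1, p.2 + q.2).

(* Pi(x0,x1,x2) = (x1/x0, x2/x0) and its differential (Jacobian) at x applied to w *)
Definition Pi (x : 'cV[R]_3) : R * R := (x1 x / x0 x, x2 x / x0 x).
Definition dPi (x w : 'cV[R]_3) : R * R :=
  (x1 w / x0 x - x1 x * x0 w / (x0 x) ^+ 2, x2 w / x0 x - x2 x * x0 w / (x0 x) ^+ 2).

Definition lift (eta : R * R) : 'cV[R]_3 := v3 1 eta.1 eta.2.

(* projective action A . eta = Pi(A(1,eta)) and its differential at eta applied to u *)
Definition act (A : 'M[R]_3) (eta : R * R) : R * R := Pi (A *m lift eta).
Definition dact (A : 'M[R]_3) (eta u : R * R) : R * R :=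
  dPi (A *m lift eta) (A *m v3 0 u.1 u.2).

Definition push (A : 'M[R]_3) (Y : R * R -> R * R) (eta : R * R) : R * R :=
  let e := act (invmx A) eta in dact A e (Y e).

(* Minkowski cross product: <x ⊠ y, u> = det(x,y,u) *)
Definition mcross (x y : 'cV[R]_3) : 'cV[R]_3 :=
  v3 (- (x1 x * x2 y - x2 x * x1 y)) (x2 x * x0 y - x0 x * x2 y)
     (x0 x * x1 y - x1 x * x0 y).

Definition Lambda (v : 'cV[R]_3) (eta : R * R) : R * R :=
  dPi (lift eta) (mcross (lift eta) v).

(* vector field X(z) = i z phi(z) on S^1, and conversely the coefficient phi_X *)
Definition vf_of_phi (phi : R * R -> R) (z : R * R) : R * R :=
  (- z.2 * phi z, z.1 * phi z).
Definition phi_of (Y : R * R -> R * R) (z : R * R) : R :=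
  - z.2 * (Y z).1 + z.1 * (Y z).2.

Definition aff (c : R * R * R) (xi : R * R) : R := c.1.1 + c.1.2 * xi.1 + c.2 * xi.2.

Definition phi_minus (phi : R * R -> R) (eta : R * R) : \bar R :=
  ereal_sup [set (aff c eta)%:E | c in [set c | forall z, S1 z -> aff c z <= phi z]].
Definition phi_plus (phi : R * R -> R) (eta : R * R) : \bar R :=
  ereal_inf [set (aff c eta)%:E | c in [set c | forall z, S1 z -> phi z <= aff c z]].

Definition phi_pm (s : bool) phi := if s then phi_plus phi else phi_minus phi.

Definition Sigma (s : bool) (phi : R * R -> R) (eta : R * R) : set 'cV[R]_3 :=
  [set sg | (forall xi, D2 xi ->
               if s then (phi_plus phi xi <= (mink (lift xi) sg)%:E)%E
               else ((mink (lift xi) sg)%:E <= phi_minus phi xi)%E)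
            /\ (mink (lift eta) sg)%:E = phi_pm s phi eta].

Definition segment (p q : 'cV[R]_3) : set 'cV[R]_3 :=
  [set (1 - t) *: p + t *: q | t in [set t : R | 0 <= t <= 1]].

Definition E_defined (s : bool) (phi : R * R -> R) : Prop :=
  forall eta, D2 eta -> exists p q, Sigma s phi eta = segment p q.

Definition sigma_mid (s : bool) (phi : R * R -> R) (eta : R * R) : 'cV[R]_3 :=
  xget 0 [set m | exists p q, Sigma s phi eta = segment p q /\ m = 2^-1 *: (p + q)].

Definition E (s : bool) (phi : R * R -> R) (eta : R * R) : R * R :=
  dPi (lift eta) (mcross (lift eta) (sigma_mid s phi eta)).

End Defs.

From Pilot Require Import Defs.
From HB Require Import structures.
From mathcomp Require Import all_boot all_order all_algebra.
From mathcomp Require Import all_classical all_reals ereal.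
From mathcomp Require Import ring lra.
Import Order.TTheory GRing.Theory Num.Theory.
Local Open Scope ring_scope.

(* A vector [sig] of R^{1,2} encodes the affine function
   [xi |-> <(1,xi), sig>], so [Sigma s phi eta] is the set of affine minorants
   ([s = false]) or majorants ([s = true]) of [phi] on S^1 that support the
   corresponding envelope of [phi] at [eta].  The boundary coefficient of
   [A_* X + Lambda(v)] is [psi z = nu z * phi (A^-1 . z) + <(1,z), v>] with
   [nu z = x0 (A^-1 (1,z)) > 0], and since [A^-1] is an isometry,
   [<(1,xi), sig> = <(1,xi), v> + nu xi * <(1, A^-1 . xi), A^-1 (sig - v)>].
   So [sig |-> A^-1 (sig - v)] matches the affine minorants (majorants) of
   [psi] with those of [phi], transforming their values at [xi] by the same
   increasing affine map, whence [Sigma psi eta = A Sigma phi (A^-1 . eta) + v].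
   Affine maps preserve segments and their midpoints, [Lambda] is linear in
   its argument and equivariant under SO^+(1,2) because [A] commutes with the
   Minkowski cross product; this gives the formula.  For [Lambda v] alone
   ([A = 1], [phi = 0]) the set [Sigma] is the point [v], since an affine
   function that is nonpositive on the disk and vanishes inside it is zero. *)

Set Implicit Arguments. Unset Strict Implicit. Unset Printing Implicit Defensive.

Local Notation lift := Defs.lift.

Lemma det_mx33 (R : comNzRingType) (M : 'M[R]_3) :
  \det M = M 0 0 * (M 1 1 * M 2 2 - M 1 2 * M 2 1)
         - M 0 1 * (M 1 0 * M 2 2 - M 1 2 * M 2 0)
         + M 0 2 * (M 1 0 * M 2 1 - M 1 1 * M 2 0).
Proof.
rewrite (expand_det_row _ 0) !big_ord_recr big_ord0 /= /cofactor.
rewrite !(expand_det_row _ 0) !big_ord_recr !big_ord0 /= /cofactor !det_mx11 !mxE /=.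
pose m (a b : nat) := M (inord a) (inord b).
have mE (i j : 'I_3) : M i j = m i j by rewrite /m !inord_val.
rewrite !mE /m /= !expr0 !expr1 !expr2; ring.
Qed.

Section Minkowski.
Variable R : realType.
Local Notation V := 'cV[R]_3.

Lemma x0E (x : V) : x0 x = x 0 0.
Proof. by congr (x _ _); apply/val_inj; rewrite /= inordK. Qed.
Lemma x1E (x : V) : x1 x = x 1 0.
Proof. by congr (x _ _); apply/val_inj; rewrite /= inordK. Qed.
Lemma x2E (x : V) : x2 x = x 2 0.
Proof. by congr (x _ _); apply/val_inj; rewrite /= inordK. Qed.

Lemma x0_v3 (a b c : R) : x0 (v3 a b c) = a. Proof. by rewrite /x0 mxE inordK. Qed.
Lemma x1_v3 (a b c : R) : x1 (v3 a b c) = b. Proof. by rewrite /x1 mxE inordK. Qed.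
Lemma x2_v3 (a b c : R) : x2 (v3 a b c) = c. Proof. by rewrite /x2 mxE inordK. Qed.

Lemma v3E (x : V) : x = v3 (x0 x) (x1 x) (x2 x).
Proof.
apply/matrixP => i j; rewrite (ord1 j) mxE x0E x1E x2E.
by case: i => [[|[|[|k]]] Hi] //=; congr (x _ _); apply/val_inj.
Qed.

Lemma v3P (x y : V) : x0 x = x0 y -> x1 x = x1 y -> x2 x = x2 y -> x = y.
Proof. by move=> e0 e1 e2; rewrite [x]v3E [y]v3E e0 e1 e2. Qed.

Lemma x0D (x y : V) : x0 (x + y) = x0 x + x0 y. Proof. by rewrite /x0 mxE. Qed.
Lemma x1D (x y : V) : x1 (x + y) = x1 x + x1 y. Proof. by rewrite /x1 mxE. Qed.
Lemma x2D (x y : V) : x2 (x + y) = x2 x + x2 y. Proof. by rewrite /x2 mxE. Qed.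
Lemma x0Z a (x : V) : x0 (a *: x) = a * x0 x. Proof. by rewrite /x0 mxE. Qed.
Lemma x1Z a (x : V) : x1 (a *: x) = a * x1 x. Proof. by rewrite /x1 mxE. Qed.
Lemma x2Z a (x : V) : x2 (a *: x) = a * x2 x. Proof. by rewrite /x2 mxE. Qed.
Lemma x0N (x : V) : x0 (- x) = - x0 x. Proof. by rewrite /x0 mxE. Qed.
Lemma x1N (x : V) : x1 (- x) = - x1 x. Proof. by rewrite /x1 mxE. Qed.
Lemma x2N (x : V) : x2 (- x) = - x2 x. Proof. by rewrite /x2 mxE. Qed.
Lemma x00 : x0 (0 : V) = 0. Proof. by rewrite /x0 mxE. Qed.
Lemma x10 : x1 (0 : V) = 0. Proof. by rewrite /x1 mxE. Qed.
Lemma x20 : x2 (0 : V) = 0. Proof. by rewrite /x2 mxE. Qed.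

Definition coordE := (x0D, x1D, x2D, x0Z, x1Z, x2Z, x0N, x1N, x2N, x00, x10, x20,
  x0_v3, x1_v3, x2_v3).

Lemma minkC (x y : V) : mink x y = mink y x.
Proof. rewrite /mink; ring. Qed.
Lemma minkDr (x y z : V) : mink x (y + z) = mink x y + mink x z.
Proof. rewrite /mink !coordE; ring. Qed.
Lemma minkZr a (x y : V) : mink x (a *: y) = a * mink x y.
Proof. rewrite /mink !coordE; ring. Qed.
Lemma minkZl a (x y : V) : mink (a *: x) y = a * mink x y.
Proof. rewrite /mink !coordE; ring. Qed.
Lemma minkNl (x y : V) : mink (- x) y = - mink x y.
Proof. rewrite /mink !coordE; ring. Qed.
Lemma minkDl (x y z : V) : mink (x + y) z = mink x z + mink y z.
Proof. rewrite /mink !coordE; ring. Qed.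
Lemma mink0r (x : V) : mink x 0 = 0.
Proof. rewrite /mink !coordE; ring. Qed.

Lemma mink_lift (xi : R * R) (x : V) :
  mink (lift xi) x = - x0 x + xi.1 * x1 x + xi.2 * x2 x.
Proof. rewrite /mink /lift !coordE; ring. Qed.

Lemma mink_nondeg (d : V) : (forall w, mink d w = 0) -> d = 0.
Proof.
move=> d0; have := d0 (v3 1 0 0); have := d0 (v3 0 1 0); have := d0 (v3 0 0 1).
rewrite /mink !coordE => e2 e1 e0; apply: v3P; rewrite !coordE; lra.
Qed.

Definition cols3 (x y u : V) : 'M[R]_3 := \matrix_(i, j) [:: x i 0; y i 0; u i 0]`_j.

Lemma mink_mcross (x y u : V) : mink (mcross x y) u = \det (cols3 x y u).
Proof. rewrite det_mx33 !mxE /= /mink /mcross !coordE !x0E !x1E !x2E; ring. Qed.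

Lemma mulmx_cols3 (B : 'M[R]_3) (x y u : V) :
  B *m cols3 x y u = cols3 (B *m x) (B *m y) (B *m u).
Proof.
apply/matrixP => i j; rewrite !mxE.
by case: j => [[|[|[|k]]] Hj] //=; apply: eq_bigr => k _; rewrite mxE.
Qed.

Lemma mulmx_mcross (B : 'M[R]_3) (x y : V) : mink_isometry B -> \det B = 1 ->
  B *m mcross x y = mcross (B *m x) (B *m y).
Proof.
move=> isoB detB; have unitB : B \in unitmx by rewrite unitmxE detB unitr1.
apply/eqP; rewrite -subr_eq0; apply/eqP; apply: mink_nondeg => w.
rewrite -[w](mulKVmx unitB) minkDl minkNl isoB !mink_mcross -mulmx_cols3.
by rewrite det_mulmx detB mul1r subrr.
Qed.

Lemma mcrossZl a (x y : V) : mcross (a *: x) y = a *: mcross x y.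
Proof. apply: v3P; rewrite /mcross !coordE; ring. Qed.
Lemma mcrossDr (x y z : V) : mcross x (y + z) = mcross x y + mcross x z.
Proof. apply: v3P; rewrite /mcross !coordE; ring. Qed.

End Minkowski.

Section Lorentz.
Variable R : realType.
Local Notation V := 'cV[R]_3.

Definition disk (z : R * R) : Prop := z.1 ^+ 2 + z.2 ^+ 2 <= 1.

Lemma S1_disk (z : R * R) : S1 z -> disk z. Proof. by rewrite /S1 /disk => ->. Qed.
Lemma D2_disk (z : R * R) : D2 z -> disk z. Proof. exact: ltW. Qed.

Lemma mink_lift_lift (xi : R * R) :
  mink (lift xi) (lift xi) = xi.1 ^+ 2 + xi.2 ^+ 2 - 1.
Proof. rewrite mink_lift /lift !coordE; ring. Qed.

Definition lorentz (B : 'M[R]_3) : Prop :=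
  [/\ mink_isometry B, B \in unitmx & 0 < x0 (B *m lift (0, 0))].

Lemma O0_lorentz (A : 'M[R]_3) : O0 A -> lorentz A.
Proof.
move=> [isoA [detA posA]]; split => //; first by rewrite unitmxE detA unitr1.
rewrite x0E mxE !big_ord_recr big_ord0 /= !mxE /= !mulr0 !addr0 add0r mulr1.
rewrite (_ : A _ _ = A (inord 0) (inord 0)) //.
by congr (A _ _); apply/val_inj; rewrite /= inordK.
Qed.

Lemma lorentz1 : lorentz 1.
Proof.
by split; [move=> x y; rewrite !mul1mx | exact: unitmx1 | rewrite mul1mx x0_v3 ltr01].
Qed.

Lemma lorentzV (B : 'M[R]_3) : lorentz B -> lorentz (invmx B).
Proof.
move=> [isoB unitB posB]; have isoV : mink_isometry (invmx B).
  by move=> x y; rewrite -isoB !mulKVmx.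
split => //; first by rewrite unitmx_inv.
have := isoV (B *m lift (0, 0)) (lift (0, 0)); rewrite mulKmx //.
by rewrite [RHS]minkC !mink_lift /= !mul0r !addr0 => /oppr_inj ->.
Qed.

Lemma future_causal_x0_gt0 (y z : V) : 0 < x0 y -> mink y y < 0 -> mink z z <= 0 ->
  mink z y < 0 -> 0 < x0 z.
Proof.
rewrite /mink => y0 yy zz zy; rewrite ltNge; apply/negP => z0.
set S := x1 z * x1 y + x2 z * x2 y.
set Z := x1 z ^+ 2 + x2 z ^+ 2; set Y := x1 y ^+ 2 + x2 y ^+ 2.
have cs : S ^+ 2 <= Z * Y.
  have := sqr_ge0 (x1 z * x2 y - x2 z * x1 y); rewrite /S /Z /Y !expr2; lra.
have ZY : Z * Y <= (x0 z * x0 y) ^+ 2.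
  have Z0 : 0 <= Z by rewrite addr_ge0 ?sqr_ge0.
  have Y0 : 0 <= Y by rewrite addr_ge0 ?sqr_ge0.
  rewrite exprMn; apply: ler_pM => //; rewrite /Z /Y !expr2; lra.
have zy0 : x0 z * x0 y <= 0 by rewrite mulr_le0_ge0 // ltW.
have lt : (x0 z * x0 y) ^+ 2 < S ^+ 2.
  have n1 : 0 < x0 z * x0 y - S by rewrite /S; lra.
  have n2 : 0 < - (S + x0 z * x0 y) by lra.
  by rewrite -subr_gt0 subr_sqr -mulrNN opprB mulr_gt0.
lra.
Qed.

Lemma lorentz_x0_gt0 (B : 'M[R]_3) (xi : R * R) :
  lorentz B -> disk xi -> 0 < x0 (B *m lift xi).
Proof.
move=> [isoB _ posB] dxi; apply: (future_causal_x0_gt0 posB).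
- by rewrite isoB mink_lift_lift /=; lra.
- by rewrite isoB mink_lift_lift; move: dxi; rewrite /disk; lra.
- by rewrite isoB mink_lift /lift !coordE /=; lra.
Qed.

Lemma lift_Pi (x : V) : x0 x != 0 -> x = x0 x *: lift (Pi x).
Proof. by move=> x0n; apply: v3P; rewrite /Pi /lift !coordE /= ?mulr1 // mulrC divfK. Qed.

Lemma PiZ a (x : V) : a != 0 -> Pi (a *: x) = Pi x.
Proof. by move=> an; rewrite /Pi !coordE; congr pair; rewrite invfM mulrACA divff ?mul1r. Qed.

Lemma Pi_lift (xi : R * R) : Pi (lift xi) = xi.
Proof. by rewrite /Pi /lift !coordE !divr1; case: xi. Qed.

Lemma act1 (xi : R * R) : act 1 xi = xi.
Proof. by rewrite /act mul1mx Pi_lift. Qed.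

Lemma actM (B C : 'M[R]_3) (xi : R * R) : x0 (C *m lift xi) != 0 ->
  act B (act C xi) = act (B *m C) xi.
Proof.
move=> x0n; rewrite /act -mulmxA [in RHS](lift_Pi x0n).
by rewrite -scalemxAr PiZ.
Qed.

Lemma actKV (A : 'M[R]_3) (xi : R * R) : A \in unitmx ->
  x0 (invmx A *m lift xi) != 0 -> act A (act (invmx A) xi) = xi.
Proof. by move=> unitA x0n; rewrite actM // mulmxV // act1. Qed.

Lemma actK (A : 'M[R]_3) (xi : R * R) : A \in unitmx ->
  x0 (A *m lift xi) != 0 -> act (invmx A) (act A xi) = xi.
Proof. by move=> unitA x0n; rewrite actM // mulVmx // act1. Qed.

Lemma act_norm (B : 'M[R]_3) (xi : R * R) : mink_isometry B ->
  x0 (B *m lift xi) != 0 ->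
  (act B xi).1 ^+ 2 + (act B xi).2 ^+ 2 - 1
    = (xi.1 ^+ 2 + xi.2 ^+ 2 - 1) / x0 (B *m lift xi) ^+ 2.
Proof. by move=> isoB x0n; rewrite -[in RHS]mink_lift_lift -isoB /act /Pi /mink /=; field. Qed.

Lemma act_D2 (B : 'M[R]_3) (xi : R * R) : lorentz B -> D2 xi -> D2 (act B xi).
Proof.
move=> LB D2xi; have x0p := lorentz_x0_gt0 LB (D2_disk D2xi).
have [isoB _ _] := LB.
rewrite /D2 -subr_lt0 (act_norm isoB (lt0r_neq0 x0p)) pmulr_llt0 ?subr_lt0 //.
by rewrite invr_gt0 exprn_gt0.
Qed.

Lemma act_S1 (B : 'M[R]_3) (xi : R * R) : lorentz B -> S1 xi -> S1 (act B xi).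
Proof.
move=> LB S1xi; have x0p := lorentz_x0_gt0 LB (S1_disk S1xi).
have [isoB _ _] := LB.
by apply/eqP; rewrite -subr_eq0 (act_norm isoB (lt0r_neq0 x0p)) S1xi subrr mul0r.
Qed.

Lemma LambdaD (u v : V) (eta : R * R) :
  Lambda (u + v) eta = add2 (Lambda u eta) (Lambda v eta).
Proof.
rewrite /Lambda /dPi /add2 mcrossDr /lift !coordE /=.
congr pair; ring.
Qed.

Lemma dact_Lambda (B : 'M[R]_3) (tau : V) (xi : R * R) :
  mink_isometry B -> \det B = 1 -> x0 (B *m lift xi) != 0 ->
  dact B xi (Lambda tau xi) = Lambda (B *m tau) (act B xi).
Proof.
move=> isoB detB x0n; rewrite /dact /Lambda /act.
set w := mcross (lift xi) tau; set mu := x0 (B *m lift xi).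
set eta := Pi (B *m lift xi).
have tangent : v3 0 (dPi (lift xi) w).1 (dPi (lift xi) w).2 = w - x0 w *: lift xi.
  by apply: v3P; rewrite /dPi /lift !coordE /= ?expr1n ?divr1; ring.
have Bl : B *m lift xi = mu *: lift eta by apply: lift_Pi.
have Bw : B *m w = mu *: mcross (lift eta) (B *m tau).
  by rewrite /w mulmx_mcross // Bl mcrossZl.
rewrite tangent mulmxBr -scalemxAr Bw Bl scalerA /dPi /lift !coordE ?expr1n ?divr1.
by congr pair; field.
Qed.

End Lorentz.

Section Envelope.
Variable R : realType.
Local Notation V := 'cV[R]_3.

Lemma EFin_le_gtP (x : R) (e : \bar R) :
  (x%:E <= e)%E <-> (forall y : R, y < x -> (y%:E < e)%E).
Proof.
split=> [xe y yx | ye]; first by apply: lt_le_trans xe; rewrite lte_fin.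
case: e ye => [r | | ] ye //.
- rewrite lee_fin leNgt; apply/negP => rx.
  by have := ye ((x + r) / 2); rewrite lte_fin; lra.
- exact: leey.
- have : ((x - 1)%:E < -oo)%E by apply: ye; lra.
  by rewrite ltNge leNye.
Qed.

Lemma EFin_ge_ltP (x : R) (e : \bar R) :
  (e <= x%:E)%E <-> (forall y : R, x < y -> (e < y%:E)%E).
Proof.
split=> [ex y xy | ey]; first by apply: le_lt_trans ex _; rewrite lte_fin.
case: e ey => [r | | ] ey //.
- rewrite lee_fin leNgt; apply/negP => xr.
  by have := ey ((x + r) / 2); rewrite lte_fin; lra.
- have : (+oo < (x + 1)%:E)%E by apply: ey; lra.
  by rewrite ltNge leey.
- exact: leNye.
Qed.

(* With [sg true = -1] the majorant case becomes the minorant case for [-phi]: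
   both envelopes are then suprema of [sg s * <(1,xi), sig>]. *)
Definition sg (s : bool) : R := if s then -1 else 1.

Lemma sg_ler_pMD2l s (a nu p q : R) : 0 < nu ->
  (sg s * (a + nu * p) <= sg s * (a + nu * q)) = (sg s * p <= sg s * q).
Proof.
move=> nu_gt0; rewrite -subr_ge0 -[in RHS]subr_ge0.
have -> : sg s * (a + nu * q) - sg s * (a + nu * p) = nu * (sg s * q - sg s * p) by ring.
by rewrite pmulr_rge0.
Qed.

Definition admissible s (phi : R * R -> R) (sig : V) : Prop :=
  forall z, S1 z -> sg s * mink (lift z) sig <= sg s * phi z.

Definition below_env s (phi : R * R -> R) (xi : R * R) (x : R) : Prop :=
  forall y, y < sg s * x ->
  exists2 sig, admissible s phi sig & y < sg s * mink (lift xi) sig.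

Definition above_env s (phi : R * R -> R) (xi : R * R) (x : R) : Prop :=
  forall sig, admissible s phi sig -> sg s * mink (lift xi) sig <= sg s * x.

Definition sig_of_aff (c : R * R * R) : V := v3 (- c.1.1) c.1.2 c.2.
Definition aff_of_sig (sig : V) : R * R * R := (- x0 sig, x1 sig, x2 sig).

Lemma aff_of_sigK : cancel aff_of_sig sig_of_aff.
Proof. by move=> sig; apply: v3P; rewrite /sig_of_aff !coordE ?opprK. Qed.

Lemma aff_sig (c : R * R * R) (xi : R * R) : aff c xi = mink (lift xi) (sig_of_aff c).
Proof. rewrite mink_lift /aff /sig_of_aff !coordE; ring. Qed.

Lemma admissible_minus phi (c : R * R * R) :
  admissible false phi (sig_of_aff c) <-> forall z, S1 z -> aff c z <= phi z.
Proof. by split=> h z /h; rewrite /sg !mul1r aff_sig. Qed.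

Lemma admissible_plus phi (c : R * R * R) :
  admissible true phi (sig_of_aff c) <-> forall z, S1 z -> phi z <= aff c z.
Proof. by split=> h z /h; rewrite /sg !mulN1r lerN2 aff_sig. Qed.

Lemma EFin_le_phi_minus phi (xi : R * R) (x : R) :
  (x%:E <= phi_minus phi xi)%E <-> below_env false phi xi x.
Proof.
rewrite EFin_le_gtP /below_env /sg; split=> h y.
  rewrite mul1r => /h /ereal_sup_gtP[_ [c /admissible_minus adm <-]]; rewrite lte_fin => yc.
  by exists (sig_of_aff c); rewrite // mul1r -aff_sig.
rewrite -[x]mul1r => /h[sig adm ysig]; apply/ereal_sup_gtP.
exists (mink (lift xi) sig)%:E; last by rewrite lte_fin -[mink _ _]mul1r.
exists (aff_of_sig sig); last by rewrite aff_sig aff_of_sigK.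
by apply/admissible_minus; rewrite aff_of_sigK.
Qed.

Lemma phi_minus_le_EFin phi (xi : R * R) (x : R) :
  (phi_minus phi xi <= x%:E)%E <-> above_env false phi xi x.
Proof.
split=> [/ereal_supP h sig adm | h].
  rewrite /sg !mul1r -lee_fin; apply: h; exists (aff_of_sig sig).
    by apply/admissible_minus; rewrite aff_of_sigK.
  by rewrite aff_sig aff_of_sigK.
apply/ereal_supP => _ [c /admissible_minus adm <-].
by rewrite lee_fin aff_sig; have := h _ adm; rewrite /sg !mul1r.
Qed.

Lemma phi_plus_le_EFin phi (xi : R * R) (x : R) :
  (phi_plus phi xi <= x%:E)%E <-> below_env true phi xi x.
Proof.
rewrite EFin_ge_ltP /below_env /sg; split=> h y.
  rewrite mulN1r ltrNr => /h /ereal_inf_ltP[_ [c /admissible_plus adm <-]].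
  by rewrite lte_fin => cy; exists (sig_of_aff c); rewrite // mulN1r ltrNr -aff_sig.
move=> xy; have /h[sig adm] : - y < -1 * x by rewrite mulN1r ltrN2.
rewrite mulN1r ltrN2 => ysig; apply/ereal_inf_ltP.
exists (mink (lift xi) sig)%:E; last by rewrite lte_fin.
exists (aff_of_sig sig); last by rewrite aff_sig aff_of_sigK.
by apply/admissible_plus; rewrite aff_of_sigK.
Qed.

Lemma EFin_le_phi_plus phi (xi : R * R) (x : R) :
  (x%:E <= phi_plus phi xi)%E <-> above_env true phi xi x.
Proof.
split=> [/ereal_infP h sig adm | h].
  rewrite /sg !mulN1r lerN2 -lee_fin; apply: h; exists (aff_of_sig sig).
    by apply/admissible_plus; rewrite aff_of_sigK.
  by rewrite aff_sig aff_of_sigK.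
apply/ereal_infP => _ [c /admissible_plus adm <-].
by rewrite lee_fin aff_sig; have := h _ adm; rewrite /sg !mulN1r lerN2.
Qed.

Lemma SigmaE s phi (eta : R * R) (sig : V) :
  Sigma s phi eta sig <->
  [/\ forall xi, D2 xi -> below_env s phi xi (mink (lift xi) sig),
      below_env s phi eta (mink (lift eta) sig)
    & above_env s phi eta (mink (lift eta) sig)].
Proof.
rewrite /Sigma /phi_pm; case: s; split.
- move=> [bound at_eta]; split=> [xi /bound /phi_plus_le_EFin //||].
    by apply/phi_plus_le_EFin; rewrite -at_eta.
  by apply/EFin_le_phi_plus; rewrite at_eta.
- move=> [bound be ae]; split=> [xi /bound /phi_plus_le_EFin //|].
  by apply/eqP; rewrite eq_le; apply/andP; split; [apply/EFin_le_phi_plus|apply/phi_plus_le_EFin].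
- move=> [bound at_eta]; split=> [xi /bound /EFin_le_phi_minus //||].
    by apply/EFin_le_phi_minus; rewrite at_eta.
  by apply/phi_minus_le_EFin; rewrite -at_eta.
- move=> [bound be ae]; split=> [xi /bound /EFin_le_phi_minus //|].
  by apply/eqP; rewrite eq_le; apply/andP; split; [apply/EFin_le_phi_minus|apply/phi_minus_le_EFin].
Qed.

End Envelope.

Arguments sg {R} s.

Section Transfer.
Variable R : realType.
Local Open Scope classical_set_scope.
Local Notation V := 'cV[R]_3.
Variables (A : 'M[R]_3) (v : V) (phi psi : R * R -> R).
Hypothesis LA : lorentz A.
(* [psi] is the boundary coefficient of [A_* X + Lambda v] when [phi] is that of
   [X]; see [phi_of_push] and [phi_of_Lambda]. *)
Hypothesis psiE : forall z, S1 z ->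
  psi z = x0 (invmx A *m lift z) * phi (act (invmx A) z) + mink (lift z) v.

Let LB : lorentz (invmx A) := lorentzV LA.
Let unitA : A \in unitmx. Proof. by case: LA. Qed.

Lemma mink_lift_transfer (xi : R * R) (sig : V) : disk xi ->
  mink (lift xi) sig = mink (lift xi) v
    + x0 (invmx A *m lift xi) * mink (lift (act (invmx A) xi)) (invmx A *m (sig - v)).
Proof.
move=> dxi; have [isoB _ _] := LB; have x0p := lorentz_x0_gt0 LB dxi.
rewrite -{1}(subrK v sig) minkDr addrC; congr (_ + _).
by rewrite -isoB {1}(lift_Pi (lt0r_neq0 x0p)) minkZl.
Qed.

Lemma transferK (sig : V) : A *m (invmx A *m (sig - v)) + v = sig.
Proof. by rewrite mulKVmx // subrK. Qed.

Lemma invmx_transfer (tau : V) : invmx A *m (A *m tau + v - v) = tau.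
Proof. by rewrite addrK mulKmx. Qed.

Lemma admissible_transfer s (tau : V) :
  admissible s psi (A *m tau + v) <-> admissible s phi tau.
Proof.
rewrite -{2}(invmx_transfer tau); split=> adm z S1z.
- have S1Az := act_S1 LA S1z.
  have Az_ne0 := lt0r_neq0 (lorentz_x0_gt0 LA (S1_disk S1z)).
  have x0p := lorentz_x0_gt0 LB (S1_disk S1Az).
  have := adm _ S1Az; rewrite psiE // (mink_lift_transfer _ (S1_disk S1Az)) actK //.
  by rewrite [_ * phi z + _]addrC sg_ler_pMD2l.
- have x0p := lorentz_x0_gt0 LB (S1_disk S1z).
  rewrite psiE // (mink_lift_transfer _ (S1_disk S1z)) [_ * phi _ + _]addrC.
  by rewrite sg_ler_pMD2l //; apply/adm/act_S1.
Qed.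

Section AtPoint.
Variables (s : bool) (xi : R * R).
Hypothesis dxi : disk xi.
Let nu := x0 (invmx A *m lift xi).
Let a := sg s * mink (lift xi) v.
Let nu_gt0 : 0 < nu. Proof. exact: lorentz_x0_gt0 LB dxi. Qed.

Lemma sg_mink_transfer (tau : V) : sg s * mink (lift xi) (A *m tau + v)
  = a + nu * (sg s * mink (lift (act (invmx A) xi)) tau).
Proof. by rewrite (mink_lift_transfer _ dxi) invmx_transfer /a /nu; ring. Qed.

Lemma below_env_transfer (tau : V) :
  below_env s psi xi (mink (lift xi) (A *m tau + v))
  <-> below_env s phi (act (invmx A) xi) (mink (lift (act (invmx A) xi)) tau).
Proof.
split=> env y.
- move=> y_lt; have /env[sig] : a + nu * y < sg s * mink (lift xi) (A *m tau + v).
    by rewrite sg_mink_transfer ltrD2l ltr_pM2l.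
  rewrite -(transferK sig) admissible_transfer sg_mink_transfer ltrD2l ltr_pM2l //.
  by exists (invmx A *m (sig - v)).
- rewrite sg_mink_transfer => y_lt.
  have /env[tau' adm ytau'] : nu^-1 * (y - a) < sg s * mink (lift (act (invmx A) xi)) tau.
    by rewrite ltr_pdivrMl // ltrBlDl.
  exists (A *m tau' + v); first exact/admissible_transfer.
  by rewrite sg_mink_transfer -ltrBlDl -ltr_pdivrMl.
Qed.

Lemma above_env_transfer (tau : V) :
  above_env s psi xi (mink (lift xi) (A *m tau + v))
  <-> above_env s phi (act (invmx A) xi) (mink (lift (act (invmx A) xi)) tau).
Proof.
split=> env sig.
- by move=> /admissible_transfer /env; rewrite !sg_mink_transfer lerD2l ler_pM2l.
- rewrite -(transferK sig) admissible_transfer => /env le_sig.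
  by rewrite !sg_mink_transfer lerD2l ler_pM2l.
Qed.

End AtPoint.

Lemma Sigma_transfer s (eta : R * R) : D2 eta ->
  Sigma s psi eta = [set A *m tau + v | tau in Sigma s phi (act (invmx A) eta)].
Proof.
move=> D2eta; have deta := D2_disk D2eta.
have SigmaA tau : Sigma s psi eta (A *m tau + v) <-> Sigma s phi (act (invmx A) eta) tau.
  rewrite !SigmaE; split=> -[bound be ae].
    split; [|exact/(below_env_transfer s deta)|exact/(above_env_transfer s deta)].
    move=> xi D2xi; have D2Axi := act_D2 LA D2xi.
    have Axi_ne0 := lt0r_neq0 (lorentz_x0_gt0 LA (D2_disk D2xi)).
    by have /(below_env_transfer s (D2_disk D2Axi)) := bound _ D2Axi; rewrite actK.
  split; [|exact/(below_env_transfer s deta)|exact/(above_env_transfer s deta)].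
  by move=> xi D2xi; apply/(below_env_transfer s (D2_disk D2xi))/bound/act_D2.
apply/seteqP; split=> [sig | _ [tau Stau <-]]; last exact/SigmaA.
by rewrite -(transferK sig) SigmaA; exists (invmx A *m (sig - v)).
Qed.

End Transfer.

Section Zero.
Variable R : realType.
Local Open Scope classical_set_scope.
Local Notation V := 'cV[R]_3.

Lemma affine_le_disk (a b c : R) (xi : R * R) :
  (forall z, S1 z -> z.1 * b + z.2 * c <= a) -> disk xi -> xi.1 * b + xi.2 * c <= a.
Proof.
move=> le_a dxi; set r := Num.sqrt (b ^+ 2 + c ^+ 2).
have bc_ge0 : 0 <= b ^+ 2 + c ^+ 2 by rewrite addr_ge0 ?sqr_ge0.
have r_ge0 : 0 <= r := sqrtr_ge0 _.
have rr : r ^+ 2 = b ^+ 2 + c ^+ 2 by rewrite sqr_sqrtr.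
have r_le_a : r <= a.
  have [r0 | r_neq0] := eqVneq r 0.
    move: rr; rewrite r0 expr0n /= => /esym/eqP.
    rewrite paddr_eq0 ?sqr_ge0 // !sqrf_eq0 => /andP[/eqP b0 /eqP c0].
    by have := le_a (1, 0); rewrite /S1 b0 c0 /= expr1n expr0n addr0 !mulr0 addr0; apply.
  have := le_a (b / r, c / r); rewrite /S1 /= !expr_div_n -mulrDl -rr divff ?expf_neq0 //.
  have -> : b / r * b + c / r * c = r ^+ 2 / r by rewrite rr; field.
  by rewrite expr2 mulfK //; apply.
have cs : (xi.1 * b + xi.2 * c) ^+ 2 <= r ^+ 2.
  have := sqr_ge0 (xi.1 * c - xi.2 * b); move: dxi; rewrite /disk rr !expr2 => dxi.
  have : 0 <= (1 - xi.1 * xi.1 - xi.2 * xi.2) * (b * b + c * c) by rewrite mulr_ge0; lra.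
  nra.
move: cs; rewrite !expr2; nra.
Qed.

Lemma admissible0 s (sig : V) (xi : R * R) :
  admissible s (fun=> 0) sig -> disk xi -> sg s * mink (lift xi) sig <= 0.
Proof.
move=> adm; rewrite -minkZr mink_lift -addrA addrC subr_le0; apply: affine_le_disk => z /adm.
by rewrite -minkZr mink_lift mulr0 -addrA addrC subr_le0.
Qed.

Lemma below_env0 s (xi : R * R) (x : R) :
  disk xi -> below_env s (fun=> 0) xi x <-> sg s * x <= 0.
Proof.
move=> dxi; split=> [env | x_le0 y y_lt].
  by rewrite leNgt; apply/negP => /env[sig adm]; rewrite ltNge (admissible0 adm dxi).
by exists 0; [move=> z _; rewrite mink0r | rewrite mink0r mulr0; apply: lt_le_trans x_le0].
Qed.

Lemma above_env0 s (xi : R * R) (x : R) :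
  disk xi -> above_env s (fun=> 0) xi x <-> 0 <= sg s * x.
Proof.
move=> dxi; split=> [env | x_ge0 sig adm].
  by have := env 0; rewrite mink0r mulr0; apply=> z _; rewrite mink0r.
exact: le_trans (admissible0 adm dxi) x_ge0.
Qed.

Lemma D2_shift (a b e : R) : a ^+ 2 + b ^+ 2 < 1 -> 0 <= 4 * e <= 1 - a ^+ 2 - b ^+ 2 ->
  (a + e) ^+ 2 + b ^+ 2 < 1 /\ (a - e) ^+ 2 + b ^+ 2 < 1.
Proof.
move=> D2ab /andP[e_ge0 e_le]; have b2_ge0 := sqr_ge0 b.
have a_lt1 : a ^+ 2 < 1 by lra.
have [a1 a2] : a < 1 /\ -1 < a by rewrite expr2 in a_lt1; split; nra.
rewrite !expr2 in D2ab e_le *; split; nra.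
Qed.

Lemma mink_lift_max_interior (tau : V) (eta : R * R) :
  (forall xi, D2 xi -> mink (lift xi) tau <= 0) -> D2 eta ->
  mink (lift eta) tau = 0 -> tau = 0.
Proof.
case: eta => a b le0 D2ab eq0; rewrite /D2 /= in D2ab.
have le0' x y : x ^+ 2 + y ^+ 2 < 1 -> - x0 tau + x * x1 tau + y * x2 tau <= 0.
  by move=> xy; have := le0 (x, y) xy; rewrite mink_lift.
set e := (1 - a ^+ 2 - b ^+ 2) / 4.
have e_gt0 : 0 < e by rewrite /e; lra.
have e_le : 0 <= 4 * e <= 1 - a ^+ 2 - b ^+ 2 by rewrite /e; apply/andP; split; lra.
have [D2r D2l] := D2_shift D2ab e_le.
have [D2u D2d] : (b + e) ^+ 2 + a ^+ 2 < 1 /\ (b - e) ^+ 2 + a ^+ 2 < 1.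
  by apply: D2_shift; [lra | move/andP: e_le => [? ?]; apply/andP; split; lra].
rewrite addrC in D2u; rewrite addrC in D2d.
move: eq0 (le0' _ _ D2r) (le0' _ _ D2l) (le0' _ _ D2u) (le0' _ _ D2d).
rewrite mink_lift /= => eq0 le1 le2 le3 le4.
have /eqP : e * x1 tau = 0 by lra.
rewrite mulf_eq0 gt_eqF //= => /eqP x1_0.
have /eqP : e * x2 tau = 0 by lra.
rewrite mulf_eq0 gt_eqF //= => /eqP x2_0.
by apply: v3P; rewrite !coordE; move: eq0; rewrite x1_0 x2_0; lra.
Qed.

Lemma Sigma0 s (eta : R * R) : D2 eta -> Sigma s (fun=> 0) eta = [set 0].
Proof.
move=> D2eta; have deta := D2_disk D2eta.
apply/seteqP; split=> [sig | _ ->]; last first.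
  apply/SigmaE; rewrite mink0r; split.
  - by move=> xi /D2_disk dxi; rewrite mink0r; apply/below_env0; rewrite ?mulr0.
  - by apply/below_env0; rewrite ?mulr0.
  - by apply/above_env0; rewrite ?mulr0.
move=> /SigmaE[bound be ae].
have le0 xi : D2 xi -> mink (lift xi) (sg s *: sig) <= 0.
  by move=> D2xi; rewrite minkZr; apply/(below_env0 s _ (D2_disk D2xi))/bound.
have eq0 : mink (lift eta) (sg s *: sig) = 0.
  by apply/le_anti; rewrite le0 // minkZr; apply/(above_env0 s _ deta).
have /eqP := mink_lift_max_interior le0 D2eta eq0.
by rewrite scaler_eq0 => /orP[|/eqP //]; rewrite /sg; case: (s); rewrite ?oppr_eq0 oner_eq0.
Qed.

End Zero.

Section Segments.
Variable R : realType.
Local Open Scope classical_set_scope.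
Local Notation V := 'cV[R]_3.

Lemma convex_comb_minmax (a b t : R) : 0 <= t <= 1 ->
  Num.min a b <= (1 - t) * a + t * b <= Num.max a b.
Proof.
move=> /andP[t0 t1]; rewrite ge_min le_max.
by case: (leP a b) => ab; rewrite ?orbT ?andbT /=; nra.
Qed.

Lemma segment_l (p q : V) : segment p q p.
Proof. by exists 0; rewrite /= ?lexx ?ler01 ?subr0 ?scale1r ?scale0r ?addr0. Qed.

Lemma segment_r (p q : V) : segment p q q.
Proof. by exists 1; rewrite /= ?lexx ?ler01 ?subrr ?scale0r ?scale1r ?add0r. Qed.

Lemma segmentxx (p : V) : segment p p = [set p].
Proof.
apply/seteqP; split=> [_ [t _ <-] | _ ->]; last exact: segment_l.
by rewrite -scalerDl subrK scale1r.
Qed.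

Lemma segment_entry (p q x : V) (i : 'I_3) : segment p q x ->
  Num.min (p i 0) (q i 0) <= x i 0 <= Num.max (p i 0) (q i 0).
Proof. by move=> [t t01 <-]; rewrite !mxE; apply: convex_comb_minmax. Qed.

Lemma segment_midpoint (p q p' q' : V) :
  segment p q = segment p' q' -> p + q = p' + q'.
Proof.
move=> E; apply/matrixP => i j; rewrite (ord1 j) !mxE -addr_min_max -[RHS]addr_min_max.
have in_pq x : segment p' q' x -> segment p q x by rewrite E.
have in_p'q' x : segment p q x -> segment p' q' x by rewrite E.
have /andP[l1 u1] := segment_entry i (in_pq _ (segment_l p' q')).
have /andP[l2 u2] := segment_entry i (in_pq _ (segment_r p' q')).
have /andP[l3 u3] := segment_entry i (in_p'q' _ (segment_l p q)).
have /andP[l4 u4] := segment_entry i (in_p'q' _ (segment_r p q)).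
by congr (_ + _); apply/le_anti; rewrite ?le_min ?ge_max ?l1 ?l2 ?l3 ?l4 ?u1 ?u2 ?u3 ?u4.
Qed.

Lemma image_segment (A : 'M[R]_3) (v p q : V) :
  [set A *m tau + v | tau in segment p q] = segment (A *m p + v) (A *m q + v).
Proof.
have comb t : A *m ((1 - t) *: p + t *: q) + v = (1 - t) *: (A *m p + v) + t *: (A *m q + v).
  by rewrite mulmxDr -!scalemxAr !scalerDr addrACA -scalerDl subrK scale1r.
apply/seteqP; split=> [_ [_ [t t01 <-] <-] | _ [t t01 <-]]; first by exists t; rewrite ?comb.
by exists ((1 - t) *: p + t *: q); [exists t | rewrite comb].
Qed.

Lemma sigma_mid_segment s phi (eta : R * R) (p q : V) :
  Sigma s phi eta = segment p q -> sigma_mid s phi eta = 2^-1 *: (p + q).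
Proof.
move=> Epq; rewrite /sigma_mid; apply: xget_unique; first by exists p, q.
by move=> _ [p' [q' [Epq' ->]]]; rewrite (segment_midpoint (etrans (esym Epq') Epq)).
Qed.

Lemma sigma_mid_set1 s phi (eta : R * R) (p : V) :
  Sigma s phi eta = [set p] -> sigma_mid s phi eta = p.
Proof.
rewrite -segmentxx => /sigma_mid_segment ->.
by apply: v3P; rewrite !coordE; field.
Qed.

Lemma sigma_mid_affine s phi psi (xi eta : R * R) (A : 'M[R]_3) (v p q : V) :
  Sigma s phi xi = segment p q ->
  Sigma s psi eta = segment (A *m p + v) (A *m q + v) ->
  sigma_mid s psi eta = A *m sigma_mid s phi xi + v.
Proof.
move=> /sigma_mid_segment -> /sigma_mid_segment ->.
by rewrite -scalemxAr mulmxDr; apply: v3P; rewrite !coordE; field.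
Qed.

End Segments.

Section Coefficients.
Variable R : realType.
Local Open Scope classical_set_scope.
Local Notation V := 'cV[R]_3.

Lemma Sigma_affine s (v : V) (psi : R * R -> R) (eta : R * R) :
  (forall z, S1 z -> psi z = mink (lift z) v) -> D2 eta -> Sigma s psi eta = [set v].
Proof.
move=> psiE D2eta.
have psiE1 z : S1 z -> psi z = x0 (invmx 1 *m lift z) * 0 + mink (lift z) v.
  by move=> S1z; rewrite mulr0 add0r psiE.
rewrite (Sigma_transfer (phi := fun=> 0) (lorentz1 R) psiE1 s D2eta).
rewrite Sigma0 ?image_set1 ?mulmx0 ?add0r //.
exact: act_D2 (lorentzV (lorentz1 R)) D2eta.
Qed.

Lemma E_Lambda s phi (eta : R * R) : E s phi eta = Lambda (sigma_mid s phi eta) eta.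
Proof. by []. Qed.

Lemma pushE (A : 'M[R]_3) (F : R * R -> R * R) (eta : R * R) :
  push A F eta = dact A (act (invmx A) eta) (F (act (invmx A) eta)).
Proof. by []. Qed.

Lemma phi_ofD (F G : R * R -> R * R) (z : R * R) :
  phi_of (fun z => add2 (F z) (G z)) z = phi_of F z + phi_of G z.
Proof. rewrite /phi_of /add2 /=; ring. Qed.

Lemma phi_of_Lambda (v : V) (z : R * R) : S1 z -> phi_of (Lambda v) z = mink (lift z) v.
Proof.
rewrite /S1 => z1; apply/eqP; rewrite -subr_eq0; apply/eqP.
transitivity (x0 v * (1 - (z.1 ^+ 2 + z.2 ^+ 2))); last by rewrite z1 subrr mulr0.
rewrite /phi_of /Lambda /dPi mink_lift /mcross /lift !coordE /= expr1n !divr1; ring.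
Qed.

Lemma mcross_lift_tangent (e : R * R) : S1 e ->
  mcross (lift e) (v3 0 (- e.2) e.1) = - lift e.
Proof.
rewrite /S1 => e1; apply: v3P; rewrite /mcross /lift !coordE /=; try ring.
by rewrite -e1; ring.
Qed.

Lemma phi_of_push (A : 'M[R]_3) (phi : R * R -> R) (z : R * R) :
  lorentz A -> \det A = 1 -> S1 z ->
  phi_of (push A (vf_of_phi phi)) z = x0 (invmx A *m lift z) * phi (act (invmx A) z).
Proof.
move=> LA detA S1z; have [isoA unitA _] := LA; have LB := lorentzV LA.
set e := act (invmx A) z; set u : V := v3 0 (- e.2) e.1.
have nu_gt0 := lorentz_x0_gt0 LB (S1_disk S1z).
set nu := x0 (invmx A *m lift z) in nu_gt0 *.
have Ale : A *m lift e = nu^-1 *: lift z.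
  by rewrite -[lift z in RHS](mulKVmx unitA) (lift_Pi (lt0r_neq0 nu_gt0)) -scalemxAr
    scalerA mulVf ?lt0r_neq0 ?scale1r.
have cross : mcross (lift z) (A *m u) = - lift z.
  have lz : lift z = nu *: (A *m lift e) by rewrite Ale scalerA divff ?lt0r_neq0 ?scale1r.
  rewrite {1}lz mcrossZl -mulmx_mcross // (mcross_lift_tangent (act_S1 LB S1z)).
  by rewrite mulmxN scalerN -lz.
have vfe : v3 0 (vf_of_phi phi e).1 (vf_of_phi phi e).2 = phi e *: u.
  by apply: v3P; rewrite /vf_of_phi !coordE /=; ring.
have /(congr1 (@x0 R)) := cross.
rewrite x0N /mcross /lift !coordE /= => unit_det.
rewrite /phi_of /push -/e /dact vfe -scalemxAr Ale /dPi !coordE /=.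
transitivity (nu * phi e * (z.1 * x2 (A *m u) - z.2 * x1 (A *m u))).
  by field; rewrite lt0r_neq0.
by rewrite (_ : _ - _ = 1) ?mulr1 //; lra.
Qed.

End Coefficients.

Unset Implicit Arguments.

Theorem lemma4p7 (R : realType) (s : bool) (phi : R * R -> R)
    (A : 'M[R]_3) (v : 'cV[R]_3) :
  E_defined s phi -> O0 A ->
  let Y := fun z => add2 (push A (vf_of_phi phi) z) (Lambda v z) in
  E_defined s (phi_of Y) /\ E_defined s (phi_of (Lambda v)) /\
  forall eta, D2 eta ->
    E s (phi_of Y) eta = add2 (push A (E s phi) eta) (E s (phi_of (Lambda v)) eta).
Proof.
move=> Edef O0A Y; have LA := O0_lorentz O0A; have [_ [detA _]] := O0A.
have LB := lorentzV LA; have [isoA unitA _] := LA.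
have phiY z : S1 z ->
    phi_of Y z = x0 (invmx A *m lift z) * phi (act (invmx A) z) + mink (lift z) v.
  by move=> S1z; rewrite phi_ofD phi_of_push // phi_of_Lambda.
have SigmaL eta : D2 eta -> Sigma s (phi_of (Lambda v)) eta = [set v]%classic.
  by apply: Sigma_affine => z; apply: phi_of_Lambda.
have segY eta : D2 eta -> exists p q, Sigma s phi (act (invmx A) eta) = segment p q
    /\ Sigma s (phi_of Y) eta = segment (A *m p + v) (A *m q + v).
  move=> D2eta; have [p [q Epq]] := Edef _ (act_D2 LB D2eta).
  by exists p, q; rewrite (Sigma_transfer LA phiY) // Epq image_segment.
split; first by move=> eta /segY[p [q [_ EY]]]; exists (A *m p + v), (A *m q + v).
split; first by move=> eta /SigmaL EL; exists v, v; rewrite segmentxx.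
move=> eta D2eta; have [p [q [Epq EY]]] := segY _ D2eta.
have x0B := lt0r_neq0 (lorentz_x0_gt0 LB (D2_disk D2eta)).
have x0A := lt0r_neq0 (lorentz_x0_gt0 LA (D2_disk (act_D2 LB D2eta))).
rewrite pushE !E_Lambda (sigma_mid_affine Epq EY) (sigma_mid_set1 (SigmaL _ D2eta)).
by rewrite LambdaD dact_Lambda ?actKV.
Qed.
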